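(* Let $n,\nu\ge1$ and let the coefficients $\gamma^{(f)}_{ik,j},\gamma^{(m)}_{ik,l}$ satisfy $\gamma^{(f)}_{ik,j}\ge0$, $\gamma^{(m)}_{ik,l}\ge0$ and $\sum_{j=1}^n\gamma^{(f)}_{ik,j}+\sum_{l=1}^\nu\gamma^{(m)}_{ik,l}=1$ for all $i\in\{1,\dots,n\}$, $k\in\{1,\dots,\nu\}$. Then the normalized gonosomal operator $V$ maps $\mathcal S^{n,\nu}$ into itself if and only if, for every $i\in\{1,\dots,n\}$ and $k\in\{1,\dots,\nu\}$, the vector $(\gamma^{(f)}_{ik,1},\dots,\gamma^{(f)}_{ik,n},\gamma^{(m)}_{ik,1},\dots,\gamma^{(m)}_{ik,\nu})$ belongs to $\mathcal S^{n,\nu}$.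
   Context: $S^{n+\nu-1}=\{(x_1,\dots,x_n,y_1,\dots,y_\nu)\in\mathbb{R}^{n+\nu}: x_i\ge0,\ y_j\ge0,\ \sum_i x_i+\sum_j y_j=1\}$. $\mathcal O=\{s\in S^{n+\nu-1}: (x_1,\dots,x_n)=0 \text{ or } (y_1,\dots,y_\nu)=0\}$ and $\mathcal S^{n,\nu}=S^{n+\nu-1}\setminus\mathcal O$. The normalized gonosomal operator $V$ on $\mathcal S^{n,\nu}$ is $V(x,y)=(x',y')$ with $x'_j=\dfrac{\sum_{i=1}^n\sum_{k=1}^\nu\gamma^{(f)}_{ik,j}x_iy_k}{(\sum_{i=1}^n x_i)(\sum_{k=1}^\nu y_k)}$ ($j=1,\dots,n$), $y'_l=\dfrac{\sum_{i=1}^n\sum_{k=1}^\nu\gamma^{(m)}_{ik,l}x_iy_k}{(\sum_{i=1}^n x_i)(\sum_{k=1}^\nu y_k)}$ ($l=1,\dots,\nu$). *)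

(* the statement is purely algebraic (sums, products,
   quotients, order), stated over an arbitrary real field R (which
   includes the real numbers). *)
From HB Require Import structures.
From mathcomp Require Import all_boot all_order all_algebra.
Set Implicit Arguments. Unset Strict Implicit. Unset Printing Implicit Defensive.
Import Order.TTheory GRing.Theory Num.Theory.
Local Open Scope ring_scope.

(* A point of S^{n+nu-1} is a pair (x, y) with x : 'I_n -> R, y : 'I_nu -> R
   (indices 1..n shifted to 0..n-1).
   in_Snnu x y  <->  (x,y) in S^{n,nu} = S^{n+nu-1} \ O, i.e.
   nonnegative coordinates summing to 1, with x <> 0 and y <> 0. *)
Definition in_Snnu (R : realFieldType) (n nu : nat)
    (x : 'I_n -> R) (y : 'I_nu -> R) : Prop :=
  [/\ (forall i, 0 <= x i), (forall k, 0 <= y k),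
      \sum_(i < n) x i + \sum_(k < nu) y k = 1,
      ~ (forall i, x i = 0) & ~ (forall k, y k = 0)].

(* The normalized gonosomal operator V(x,y) = (x', y').
   gf i k j = gamma^(f)_{ik,j},  gm i k l = gamma^(m)_{ik,l}. *)
Definition gonoV (R : realFieldType) (n nu : nat)
    (gf : 'I_n -> 'I_nu -> 'I_n -> R) (gm : 'I_n -> 'I_nu -> 'I_nu -> R)
    (x : 'I_n -> R) (y : 'I_nu -> R) : ('I_n -> R) * ('I_nu -> R) :=
  (fun j => (\sum_(i < n) \sum_(k < nu) gf i k j * x i * y k)
              / ((\sum_(i < n) x i) * (\sum_(k < nu) y k)),
   fun l => (\sum_(i < n) \sum_(k < nu) gm i k l * x i * y k)
              / ((\sum_(i < n) x i) * (\sum_(k < nu) y k))).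

From HB Require Import structures.
From mathcomp Require Import all_boot all_order all_algebra.
Import Order.TTheory GRing.Theory Num.Theory.
Set Implicit Arguments. Unset Strict Implicit. Unset Printing Implicit Defensive.
Local Open Scope ring_scope.

(* V(x, y) is the convex combination of the coefficient vectors
   (gamma^(f)_{ik}, gamma^(m)_{ik}) with weights x_i y_k / ((sum x)(sum y)).
   The set S^{n,nu} is convex (a positive weight on a point with nonzero
   x- and y-parts keeps those parts nonzero), so V maps S^{n,nu} into itself
   as soon as the coefficient vectors lie in it.  Conversely, at the point
   x = e_i / 2, y = e_k / 2 the only nonzero weight is the one of (i, k), so
   V returns the coefficient vector of (i, k) itself. *)

Section FiniteSums.
Variables (R : realFieldType) (I : finType).

Lemma psumr_neq0_nz (F : I -> R) :
  (forall i, 0 <= F i) -> ~ (forall i, F i = 0) -> \sum_i F i != 0.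
Proof.
move=> F_ge0 F_nz; apply/eqP => /psumr_eq0P F_eq0.
by apply: F_nz => i; apply: F_eq0 => // j _.
Qed.

Lemma exists_gt0_nz (F : I -> R) :
  (forall i, 0 <= F i) -> ~ (forall i, F i = 0) -> exists i, 0 < F i.
Proof.
move=> F_ge0 F_nz.
have [i _ | | i /andP[_ Fi_gt0]] := @psumr_neq0P _ _ predT F; first exact: F_ge0.
  exact/eqP/psumr_neq0_nz.
by exists i.
Qed.

Definition delta_at (i0 : I) (a : R) (i : I) : R := if i == i0 then a else 0.

Lemma sum_delta_at (i0 : I) (a : R) : \sum_i delta_at i0 a i = a.
Proof. by rewrite -big_mkcond big_pred1_eq. Qed.

Lemma sum_delta_atM (i0 : I) (F : I -> R) : \sum_i delta_at i0 1 i * F i = F i0.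
Proof.
rewrite (bigD1 i0) //= big1 => [|i /negbTE i_neq]; last by rewrite /delta_at i_neq mul0r.
by rewrite /delta_at eqxx mul1r addr0.
Qed.

End FiniteSums.

Section Simplex.
Variables (R : realFieldType) (n nu : nat).

Lemma eq_in_Snnu (x x' : 'I_n -> R) (y y' : 'I_nu -> R) :
  x =1 x' -> y =1 y' -> in_Snnu x y -> in_Snnu x' y'.
Proof.
move=> ex ey [x_ge0 y_ge0 xy_sum x_nz y_nz]; split.
- by move=> i; rewrite -ex.
- by move=> k; rewrite -ey.
- by rewrite -(eq_bigr _ (fun i _ => ex i)) -(eq_bigr _ (fun k _ => ey k)).
- by move=> x'0; apply: x_nz => i; rewrite ex.
- by move=> y'0; apply: y_nz => k; rewrite ey.
Qed.

Lemma in_Snnu_convex (T : finType) (w : T -> R)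
    (px : T -> 'I_n -> R) (py : T -> 'I_nu -> R) :
  (forall t, 0 <= w t) -> \sum_t w t = 1 -> (forall t, in_Snnu (px t) (py t)) ->
  in_Snnu (fun j => \sum_t w t * px t j) (fun l => \sum_t w t * py t l).
Proof.
move=> w_ge0 w_sum pS.
have [t0 wt0_gt0] : exists t0, 0 < w t0.
  apply: exists_gt0_nz => // w0; move: w_sum; rewrite big1 // => /eqP.
  by rewrite eq_sym oner_eq0.
have [px0 py0 _ px_nz py_nz] := pS t0.
have comb_nz (F : T -> R) : (forall t, 0 <= F t) -> 0 < F t0 ->
    \sum_t w t * F t <> 0.
  move=> F_ge0 Ft0_gt0 comb0.
  have wF_ge0 t : predT t -> 0 <= w t * F t by rewrite mulr_ge0.
  have := @psumr_eq0P _ _ _ _ wF_ge0 comb0 t0 isT.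
  by apply/eqP; rewrite gt_eqF // mulr_gt0.
split.
- by move=> j; apply: sumr_ge0 => t _; rewrite mulr_ge0 //; case: (pS t).
- by move=> l; apply: sumr_ge0 => t _; rewrite mulr_ge0 //; case: (pS t).
- rewrite exchange_big [X in _ + X]exchange_big -big_split /= -[RHS]w_sum.
  apply: eq_bigr => t _; rewrite -!mulr_sumr -mulrDr.
  by case: (pS t) => _ _ -> _ _; rewrite mulr1.
- have [j pxj_gt0] := exists_gt0_nz px0 px_nz.
  by move=> /(_ j); apply: (comb_nz (px^~ j)) => // t; case: (pS t).
- have [l pyl_gt0] := exists_gt0_nz py0 py_nz.
  by move=> /(_ l); apply: (comb_nz (py^~ l)) => // t; case: (pS t).
Qed.

Lemma in_Snnu_delta (i : 'I_n) (k : 'I_nu) (a b : R) :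
  0 < a -> 0 < b -> a + b = 1 -> in_Snnu (delta_at i a) (delta_at k b).
Proof.
move=> a_gt0 b_gt0 ab1; split; rewrite ?sum_delta_at //.
- by move=> i'; rewrite /delta_at; case: eqP => // _; exact: ltW.
- by move=> k'; rewrite /delta_at; case: eqP => // _; exact: ltW.
- by move=> /(_ i) /eqP; rewrite /delta_at eqxx gt_eqF.
- by move=> /(_ k) /eqP; rewrite /delta_at eqxx gt_eqF.
Qed.

End Simplex.

Section GonosomalOperator.
Variables (R : realFieldType) (n nu : nat).
Variables (gf : 'I_n -> 'I_nu -> 'I_n -> R) (gm : 'I_n -> 'I_nu -> 'I_nu -> R).

Definition gono_weight (x : 'I_n -> R) (y : 'I_nu -> R) (p : 'I_n * 'I_nu) : R :=
  x p.1 * y p.2 / ((\sum_i x i) * (\sum_k y k)).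

Lemma gono_weight_ge0 x y :
  (forall i, 0 <= x i) -> (forall k, 0 <= y k) -> forall p, 0 <= gono_weight x y p.
Proof.
by move=> x_ge0 y_ge0 p; rewrite !(mulr_ge0, invr_ge0, sumr_ge0).
Qed.

Lemma gono_weight_sum x y :
  \sum_i x i != 0 -> \sum_k y k != 0 -> \sum_p gono_weight x y p = 1.
Proof.
move=> x_neq0 y_neq0; rewrite -mulr_suml -(pair_bigA _ (fun i k => x i * y k)) /=.
by rewrite -big_distrlr /= divff // mulf_neq0.
Qed.

Lemma gono_weight_delta i k (a b : R) : a != 0 -> b != 0 ->
  gono_weight (delta_at i a) (delta_at k b) =1 delta_at (i, k) 1.
Proof.
move=> a_neq0 b_neq0 [i' k']; rewrite /gono_weight !sum_delta_at /delta_at xpair_eqE.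
by case: eqP => _; case: eqP => _ /=; rewrite ?(mul0r, mulr0) // divff ?mulf_neq0.
Qed.

Lemma gono_weightE (c : 'I_n -> 'I_nu -> R) x y :
  (\sum_i \sum_k c i k * x i * y k) / ((\sum_i x i) * (\sum_k y k))
  = \sum_p gono_weight x y p * c p.1 p.2.
Proof.
rewrite -(pair_bigA _ (fun i k => gono_weight x y (i, k) * c i k)) [_ / _]mulr_suml.
apply: eq_bigr => i _; rewrite [_ / _]mulr_suml; apply: eq_bigr => k _.
by rewrite /gono_weight /= [RHS]mulrC !mulrA.
Qed.

Lemma gonoV_convexE x y :
  (gonoV gf gm x y).1 =1 (fun j => \sum_p gono_weight x y p * gf p.1 p.2 j)
  /\ (gonoV gf gm x y).2 =1 (fun l => \sum_p gono_weight x y p * gm p.1 p.2 l).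
Proof. by split=> j; rewrite /= gono_weightE. Qed.

Lemma gonoV_delta i k (a b : R) : a != 0 -> b != 0 ->
  (gonoV gf gm (delta_at i a) (delta_at k b)).1 =1 gf i k
  /\ (gonoV gf gm (delta_at i a) (delta_at k b)).2 =1 gm i k.
Proof.
move=> a_neq0 b_neq0; have [Vx Vy] := gonoV_convexE (delta_at i a) (delta_at k b).
by split=> j; rewrite ?(Vx, Vy) /=;
  under eq_bigr do rewrite gono_weight_delta //; rewrite sum_delta_atM.
Qed.

End GonosomalOperator.

Theorem proposition4p1 (R : realFieldType) (n nu : nat)
    (gf : 'I_n -> 'I_nu -> 'I_n -> R) (gm : 'I_n -> 'I_nu -> 'I_nu -> R) :
  (0 < n)%N -> (0 < nu)%N ->
  (forall i k j, 0 <= gf i k j) ->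
  (forall i k l, 0 <= gm i k l) ->
  (forall i k, \sum_(j < n) gf i k j + \sum_(l < nu) gm i k l = 1) ->
  ((forall x y, in_Snnu x y ->
      in_Snnu (gonoV gf gm x y).1 (gonoV gf gm x y).2)
   <-> (forall i k, in_Snnu (gf i k) (gm i k))).
Proof.
(* The standing hypotheses on the coefficients are needed in neither
   direction. *)
move=> _ _ _ _ _; split.
- move=> V_S i k; pose h : R := 1 / 2%:R.
  have h_gt0 : 0 < h by rewrite divr_gt0 ?ltr0n.
  have [Vx Vy] := gonoV_delta gf gm i k (lt0r_neq0 h_gt0) (lt0r_neq0 h_gt0).
  apply: eq_in_Snnu Vx Vy (V_S _ _ (in_Snnu_delta i k h_gt0 h_gt0 _)).
  by rewrite -splitr.
- move=> coef_S x y [x_ge0 y_ge0 _ x_nz y_nz].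
  have [Vx Vy] := gonoV_convexE gf gm x y.
  apply: eq_in_Snnu (fun j => esym (Vx j)) (fun l => esym (Vy l)) _.
  apply: in_Snnu_convex => [p||p]; first exact: gono_weight_ge0.
    by apply: gono_weight_sum; apply: psumr_neq0_nz.
  exact: coef_S.
Qed.
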